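(* Let $(S,g_1^0,g_2^0,g_3^0,D_1,D_2,D_3,\xi)\in\mathrm{MC}_{\mathrm{pre}}$ satisfy $g_1^0>0$, $g_2^0<0$, $g_3^0<0$ and $c_{23}^1\neq0$ everywhere on $S$. Then there exist unique $A,B\in C^\infty(S,\mathbb{R})$ with $A,B>0$ and a unique $\sigma\in\{-1,+1\}$ such that the transformed tuple $$\big(S,\,Ag_1^0,\,Ag_2^0,\,Ag_3^0,\,\sigma AB^{g_2^0+g_3^0}D_1,\,\sigma AB^{g_3^0+g_1^0}D_2,\,\sigma AB^{g_1^0+g_2^0}D_3,\,\xi+\log A+(g_1^0+g_2^0+g_3^0)\log B\big)$$ lies in $\mathrm{MC}_{\mathrm{normal}}$. (The resulting partial map $\mathcal{N}:\mathrm{MC}_{\mathrm{pre}}\nrightarrow\mathrm{MC}_{\mathrm{normal}}$ is called normalization.)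
   Context: ''Cyclic $(i,j,k)$'' means $(i,j,k)\in\{(1,2,3),(2,3,1),(3,1,2)\}$. Let $S$ be a smooth manifold diffeomorphic to $\mathbb{R}^3$ and $D_1,D_2,D_3$ a frame of vector fields on $S$; its structure functions $c_{jk}^i\in C^\infty(S,\mathbb{R})$ are defined by $[D_j,D_k]=\sum_{i=1}^3c_{jk}^iD_i$. $\mathrm{MC}_{\mathrm{pre}}$ is the set of tuples $(S,g_1^0,g_2^0,g_3^0,D_1,D_2,D_3,\xi)$ with $g_i^0,\xi\in C^\infty(S,\mathbb{R})$ satisfying (E1) $0=g_2^0g_3^0+g_3^0g_1^0+g_1^0g_2^0$, and (E2) $0=D_i(g_j^0+g_k^0)+c_{ij}^j(g_i^0-g_j^0)+c_{ik}^k(g_i^0-g_k^0)-2D_i(\xi)g_i^0$ for all cyclic $(i,j,k)$. $\mathrm{MC}_{\mathrm{normal}}\subset\mathrm{MC}_{\mathrm{pre}}$ consists of the tuples with $(g_1^0,g_2^0,g_3^0)=\tfrac12(1,-1-u,-1-\tfrac1u)$ for some $u\in C^\infty(S,\mathbb{R})$ with $u>0$, and with $c_{23}^1=-2$. Here $B^f$ means $e^{f\log B}$. *)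

(* classical reals. S is modelled as R^3. *)
From Stdlib Require Import Reals ClassicalEpsilon.
Open Scope R_scope.

Inductive idx := I1 | I2 | I3.

Definition next (i : idx) : idx :=
  match i with I1 => I2 | I2 => I3 | I3 => I1 end.

Definition sum3 (F : idx -> R) : R := F I1 + F I2 + F I3.

Definition pt := (R * R * R)%type.

Definition coord (p : pt) (a : idx) : R :=
  match p with (x, y, z) => match a with I1 => x | I2 => y | I3 => z end end.

Definition upd (p : pt) (a : idx) (t : R) : pt :=
  match p with (x, y, z) =>
    match a with I1 => (t, y, z) | I2 => (x, t, z) | I3 => (x, y, t) end end.

(* Partial derivative d f / d x_a (chosen value; meaningful where it exists). *)
Definition pd (f : pt -> R) (a : idx) : pt -> R :=
  fun p => epsilon (inhabits 0)
    (fun l => derivable_pt_lim (fun t => f (upd p a t)) (coord p a) l).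

Fixpoint ipd (l : list idx) (f : pt -> R) : pt -> R :=
  match l with nil => f | cons a l' => ipd l' (pd f a) end.

Definition cont3 (f : pt -> R) : Prop :=
  forall p eps, eps > 0 -> exists d, d > 0 /\
    forall q, (forall a, Rabs (coord q a - coord p a) < d) -> Rabs (f q - f p) < eps.

Definition smooth (f : pt -> R) : Prop :=
  forall l : list idx, cont3 (ipd l f) /\
    forall a p, exists d, derivable_pt_lim (fun t => ipd l f (upd p a t)) (coord p a) d.

(* A vector field X = sum_a X a * d/dx_a *)
Definition VF := idx -> pt -> R.

Definition vapp (X : VF) (f : pt -> R) : pt -> R :=
  fun p => sum3 (fun a => X a p * pd f a p).

Definition bracket (X Y : VF) : VF :=
  fun a p => vapp X (Y a) p - vapp Y (X a) p.

Definition frame (D : idx -> VF) : Prop :=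
  (forall i a, smooth (D i a)) /\
  forall p (l : idx -> R),
    (forall a, sum3 (fun i => l i * D i a p) = 0) -> forall i, l i = 0.

(* c i j k = c_{jk}^i : [D_j, D_k] = sum_i c_{jk}^i D_i *)
Definition structure_fns (D : idx -> VF) (c : idx -> idx -> idx -> pt -> R) : Prop :=
  forall j k a p, bracket (D j) (D k) a p = sum3 (fun i => c i j k p * D i a p).

Definition MC_pre (g : idx -> pt -> R) (D : idx -> VF) (xi : pt -> R) : Prop :=
  frame D /\ (forall i, smooth (g i)) /\ smooth xi /\
  (forall p, 0 = g I2 p * g I3 p + g I3 p * g I1 p + g I1 p * g I2 p) /\
  exists c, structure_fns D c /\
    forall i p, let j := next i in let k := next (next i) in
      0 = vapp (D i) (fun q => g j q + g k q) p
          + c j i j p * (g i p - g j p)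
          + c k i k p * (g i p - g k p)
          - 2 * vapp (D i) xi p * g i p.

Definition MC_normal (g : idx -> pt -> R) (D : idx -> VF) (xi : pt -> R) : Prop :=
  MC_pre g D xi /\
  (exists u : pt -> R, smooth u /\ (forall p, u p > 0) /\
     forall p, g I1 p = / 2 * 1 /\ g I2 p = / 2 * (- 1 - u p)
               /\ g I3 p = / 2 * (- 1 - / u p)) /\
  forall c, structure_fns D c -> forall p, c I1 I2 I3 p = -2.

Definition rpow (B f : R) : R := exp (f * ln B).

Definition tr_g (A : pt -> R) (g : idx -> pt -> R) : idx -> pt -> R :=
  fun i p => A p * g i p.

Definition tr_D (A B : pt -> R) (s : R) (g : idx -> pt -> R) (D : idx -> VF)
  : idx -> VF :=
  fun i a p => s * A p * rpow (B p) (g (next i) p + g (next (next i)) p) * D i a p.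

Definition tr_xi (A B : pt -> R) (g : idx -> pt -> R) (xi : pt -> R) : pt -> R :=
  fun p => xi p + ln (A p) + (g I1 p + g I2 p + g I3 p) * ln (B p).

From Stdlib Require Import Reals Lra Lia ClassicalEpsilon FunctionalExtensionality List.
Open Scope R_scope.

(* Rescaling the frame by [f_i = s A B^(g_j + g_k)] multiplies the right-hand side of (E2)
   by [A f_i], up to multiples of (E1) and of its derivative, so the transformed tuple is again
   in MC_pre; its structure function is [c'^1_23 = s A B^(2 g_1) c^1_23]. Normal form thus
   amounts to [A g_1 = 1/2] and [s A B^(2 g_1) c^1_23 = -2]: the first fixes [A]; [c^1_23] is
   continuous and nowhere zero on the connected space, so it has constant sign, which fixes [s];
   and since [g_1 <> 0] the positive number [B^(2 g_1)] determines [B]. The remaining normal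
   form conditions follow from (E1) with [u = -(g_1 + g_2)/g_1]. *)

Definition is_pd (f : pt -> R) (a : idx) (p : pt) (l : R) : Prop :=
  derivable_pt_lim (fun t => f (upd p a t)) (coord p a) l.

Definition ex_pd (f : pt -> R) : Prop := forall a p, exists l, is_pd f a p l.

Lemma upd_coord (p : pt) (a : idx) : upd p a (coord p a) = p.
Proof. destruct p as [[x y] z]; destruct a; reflexivity. Qed.

Lemma pd_unique f a p l : is_pd f a p l -> pd f a p = l.
Proof.
  intro H. apply (uniqueness_limite (fun t => f (upd p a t)) (coord p a)); [|exact H].
  apply (epsilon_spec (inhabits 0) (is_pd f a p)). exists l; exact H.
Qed.

Lemma is_pd_pd f a p : ex_pd f -> is_pd f a p (pd f a p).
Proof. intro H. destruct (H a p) as [l Hl]. rewrite (pd_unique _ _ _ _ Hl). exact Hl. Qed.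

Lemma is_pd_const c a p : is_pd (fun _ => c) a p 0.
Proof. exact (derivable_pt_lim_const c _). Qed.

Lemma is_pd_plus f g a p l1 l2 :
  is_pd f a p l1 -> is_pd g a p l2 -> is_pd (fun q => f q + g q) a p (l1 + l2).
Proof. exact (derivable_pt_lim_plus _ _ _ _ _). Qed.

Lemma is_pd_mult f g a p l1 l2 : is_pd f a p l1 -> is_pd g a p l2 ->
  is_pd (fun q => f q * g q) a p (l1 * g p + f p * l2).
Proof.
  intros H1 H2. unfold is_pd.
  replace (f p) with (f (upd p a (coord p a))) by now rewrite upd_coord.
  replace (g p) with (g (upd p a (coord p a))) by now rewrite upd_coord.
  exact (derivable_pt_lim_mult _ _ _ _ _ H1 H2).
Qed.

Lemma is_pd_comp (phi : R -> R) f a p l1 l2 : is_pd f a p l1 ->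
  derivable_pt_lim phi (f p) l2 -> is_pd (fun q => phi (f q)) a p (l2 * l1).
Proof.
  intros H1 H2. replace (f p) with (f (upd p a (coord p a))) in H2 by now rewrite upd_coord.
  exact (derivable_pt_lim_comp _ _ _ _ _ H1 H2).
Qed.

Lemma pd_const c a : pd (fun _ => c) a = fun _ => 0.
Proof. apply functional_extensionality; intro q. apply pd_unique, is_pd_const. Qed.

Lemma pd_plus f g a : ex_pd f -> ex_pd g ->
  pd (fun q => f q + g q) a = fun q => pd f a q + pd g a q.
Proof.
  intros Hf Hg. apply functional_extensionality; intro q.
  apply pd_unique, is_pd_plus; apply is_pd_pd; assumption.
Qed.

Lemma pd_mult f g a : ex_pd f -> ex_pd g ->
  pd (fun q => f q * g q) a = fun q => pd f a q * g q + f q * pd g a q.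
Proof.
  intros Hf Hg. apply functional_extensionality; intro q.
  apply pd_unique, is_pd_mult; apply is_pd_pd; assumption.
Qed.

Lemma pd_comp (phi phi' : R -> R) f a : ex_pd f ->
  (forall q, derivable_pt_lim phi (f q) (phi' (f q))) ->
  pd (fun q => phi (f q)) a = fun q => phi' (f q) * pd f a q.
Proof.
  intros Hf Hphi. apply functional_extensionality; intro q.
  apply pd_unique, is_pd_comp; [apply is_pd_pd; assumption | apply Hphi].
Qed.

Lemma ex_pd_const c : ex_pd (fun _ => c).
Proof. intros a p. eexists. apply is_pd_const. Qed.

Lemma ex_pd_plus f g : ex_pd f -> ex_pd g -> ex_pd (fun q => f q + g q).
Proof. intros Hf Hg a p. eexists. apply is_pd_plus; apply is_pd_pd; assumption. Qed.

Lemma ex_pd_mult f g : ex_pd f -> ex_pd g -> ex_pd (fun q => f q * g q).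
Proof. intros Hf Hg a p. eexists. apply is_pd_mult; apply is_pd_pd; assumption. Qed.

Lemma ex_pd_comp (phi : R -> R) f : ex_pd f ->
  (forall q, exists l, derivable_pt_lim phi (f q) l) -> ex_pd (fun q => phi (f q)).
Proof.
  intros Hf Hphi a p. destruct (Hphi p) as [l Hl]. eexists.
  apply is_pd_comp; [apply is_pd_pd; assumption | exact Hl].
Qed.

Lemma derivable_pt_lim_Rinv x : x <> 0 -> derivable_pt_lim Rinv x (- (/ x * / x)).
Proof.
  intro Hx.
  assert (H := derivable_pt_lim_div (fct_cte 1) id x 0 1
    (derivable_pt_lim_const 1 x) (derivable_pt_lim_id x) Hx).
  replace (fct_cte 1 / id)%F with Rinv in H.
  - unfold id, fct_cte, Rsqr in H.
    now replace (- (/ x * / x)) with ((0 * x - 1 * 1) / (x * x)) by (field; exact Hx).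
  - apply functional_extensionality; intro y. unfold div_fct, fct_cte, id, Rdiv. ring.
Qed.

Lemma cont3_const c : cont3 (fun _ => c).
Proof.
  intros p eps He. exists 1. split; [lra|]. intros. rewrite Rminus_diag, Rabs_R0. lra.
Qed.

Lemma cont3_plus f g : cont3 f -> cont3 g -> cont3 (fun q => f q + g q).
Proof.
  intros Hf Hg p eps He.
  destruct (Hf p (eps / 2)) as [d1 [Hd1 H1]]; [lra|].
  destruct (Hg p (eps / 2)) as [d2 [Hd2 H2]]; [lra|].
  exists (Rmin d1 d2). split; [apply Rmin_pos; assumption|]. intros q Hq.
  assert (A1 := H1 q (fun a => Rlt_le_trans _ _ _ (Hq a) (Rmin_l _ _))).
  assert (A2 := H2 q (fun a => Rlt_le_trans _ _ _ (Hq a) (Rmin_r _ _))).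
  replace (f q + g q - (f p + g p)) with ((f q - f p) + (g q - g p)) by ring.
  eapply Rle_lt_trans; [apply Rabs_triang | lra].
Qed.

Lemma cont3_comp (phi : R -> R) f : cont3 f ->
  (forall q, exists l, derivable_pt_lim phi (f q) l) -> cont3 (fun q => phi (f q)).
Proof.
  intros Hf Hphi p eps He.
  destruct (Hphi p) as [l Hl].
  destruct (derivable_continuous_pt phi (f p) (exist _ l Hl) eps He) as [alp [Ha Hc]].
  destruct (Hf p alp Ha) as [d [Hd Hfd]].
  exists d. split; [exact Hd|]. intros q Hq.
  destruct (Req_dec (f q) (f p)) as [E|E].
  - rewrite E, Rminus_diag, Rabs_R0. exact He.
  - apply (Hc (f q)). split; [split; [exact I | congruence] | exact (Hfd q Hq)].
Qed.

(* Polarization: [f g = ((f + g)^2 - (f - g)^2) / 4] reduces products to sums and compositions. *)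
Lemma cont3_mult f g : cont3 f -> cont3 g -> cont3 (fun q => f q * g q).
Proof.
  intros Hf Hg.
  assert (Dpoly : forall (phi : R -> R) phi', (forall x, derivable_pt_lim phi x (phi' x)) ->
    forall h : pt -> R, forall q, exists l, derivable_pt_lim phi (h q) l)
    by (intros phi phi' Hphi h q; eexists; apply Hphi).
  assert (Dsq : forall x, derivable_pt_lim (fun x => x * x) x (1 * x + x * 1))
    by (intro x; apply (derivable_pt_lim_mult id id); apply derivable_pt_lim_id).
  assert (Dopp : forall x, derivable_pt_lim (fun x => - x) x (- 1))
    by (intro x; apply (derivable_pt_lim_opp id), derivable_pt_lim_id).
  assert (D4 : forall x, derivable_pt_lim (fun x => x / 4) x (1 / 4))
    by (intro x; apply (derivable_pt_lim_div_scal id), derivable_pt_lim_id).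
  assert (Hsq : forall h, cont3 h -> cont3 (fun q => h q * h q))
    by (intros h Hh; exact (cont3_comp _ h Hh (Dpoly _ _ Dsq h))).
  assert (Hpol := cont3_comp (fun x => x / 4) _
    (cont3_plus _ _ (Hsq _ (cont3_plus _ _ Hf Hg))
       (cont3_comp (fun x => - x) _
          (Hsq _ (cont3_plus _ _ Hf (cont3_comp (fun x => - x) _ Hg (Dpoly _ _ Dopp _))))
          (Dpoly _ _ Dopp _)))
    (Dpoly _ _ D4 _)).
  replace (fun q => f q * g q) with (fun q =>
    ((f q + g q) * (f q + g q) + - ((f q + - g q) * (f q + - g q))) / 4); [exact Hpol|].
  apply functional_extensionality; intro q. field.
Qed.

Definition smooth_upto (n : nat) (f : pt -> R) : Prop :=
  forall l : list idx, (length l <= n)%nat -> cont3 (ipd l f) /\ ex_pd (ipd l f).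

Lemma smooth_upto_0 f : cont3 f -> ex_pd f -> smooth_upto 0 f.
Proof. intros Hc Hd [|a l] Hl; [split; assumption | simpl in Hl; lia]. Qed.

Lemma smooth_upto_S n f :
  cont3 f -> ex_pd f -> (forall a, smooth_upto n (pd f a)) -> smooth_upto (S n) f.
Proof.
  intros Hc Hd Hpd [|a l] Hl; [split; assumption|]. apply (Hpd a). simpl in Hl; lia.
Qed.

Lemma smooth_upto_base n f : smooth_upto n f -> cont3 f /\ ex_pd f.
Proof. intro H. apply (H nil). simpl; lia. Qed.

Lemma smooth_upto_pd n f a : smooth_upto (S n) f -> smooth_upto n (pd f a).
Proof. intros H l Hl. apply (H (a :: l)). simpl; lia. Qed.

Lemma smooth_upto_weaken n f : smooth_upto (S n) f -> smooth_upto n f.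
Proof. intros H l Hl. apply H. lia. Qed.

Lemma smooth_upto_all f : smooth f <-> forall n, smooth_upto n f.
Proof.
  split.
  - intros H n l _. destruct (H l) as [Hc Hd]. split; [exact Hc | exact Hd].
  - intros H l. destruct (H (length l) l (le_n _)) as [Hc Hd]. split; [exact Hc | exact Hd].
Qed.

Lemma smooth_upto_const n c : smooth_upto n (fun _ => c).
Proof.
  revert c; induction n; intro c.
  - apply smooth_upto_0; [apply cont3_const | apply ex_pd_const].
  - apply smooth_upto_S; [apply cont3_const | apply ex_pd_const |].
    intro a. rewrite pd_const. apply IHn.
Qed.

Lemma smooth_upto_plus n : forall f g,
  smooth_upto n f -> smooth_upto n g -> smooth_upto n (fun q => f q + g q).
Proof.
  induction n; intros f g Hf Hg;
    destruct (smooth_upto_base _ _ Hf) as [Cf Df];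
    destruct (smooth_upto_base _ _ Hg) as [Cg Dg].
  - apply smooth_upto_0; [apply cont3_plus | apply ex_pd_plus]; assumption.
  - apply smooth_upto_S; [apply cont3_plus | apply ex_pd_plus | ]; try assumption.
    intro a. rewrite pd_plus by assumption. apply IHn; apply smooth_upto_pd; assumption.
Qed.

Lemma smooth_upto_mult n : forall f g,
  smooth_upto n f -> smooth_upto n g -> smooth_upto n (fun q => f q * g q).
Proof.
  induction n; intros f g Hf Hg;
    destruct (smooth_upto_base _ _ Hf) as [Cf Df];
    destruct (smooth_upto_base _ _ Hg) as [Cg Dg].
  - apply smooth_upto_0; [apply cont3_mult | apply ex_pd_mult]; assumption.
  - apply smooth_upto_S; [apply cont3_mult | apply ex_pd_mult | ]; try assumption.
    intro a. rewrite pd_mult by assumption.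
    apply smooth_upto_plus; apply IHn;
      solve [apply smooth_upto_pd; assumption | apply smooth_upto_weaken; assumption].
Qed.

(* Since [(phi o f)' = (phi' o f) f'], one more derivative of [phi o f] costs one derivative
   of [phi' o f]. *)
Lemma smooth_upto_comp (phi phi' : R -> R) n f :
  (forall q, derivable_pt_lim phi (f q) (phi' (f q))) ->
  smooth_upto n f -> (n <> 0%nat -> smooth_upto (pred n) (fun q => phi' (f q))) ->
  smooth_upto n (fun q => phi (f q)).
Proof.
  intros Hphi Hf Hphi'. destruct (smooth_upto_base _ _ Hf) as [Cf Df].
  assert (Ex : forall q, exists l, derivable_pt_lim phi (f q) l)
    by (intro q; eexists; apply Hphi).
  destruct n.
  - apply smooth_upto_0; [apply cont3_comp | apply ex_pd_comp]; assumption.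
  - apply smooth_upto_S; [apply cont3_comp | apply ex_pd_comp | ]; try assumption.
    intro a. rewrite (pd_comp phi phi') by assumption.
    apply smooth_upto_mult; [apply Hphi'; lia | apply smooth_upto_pd; assumption].
Qed.

Lemma smooth_upto_exp n : forall f, smooth_upto n f -> smooth_upto n (fun q => exp (f q)).
Proof.
  induction n; intros f Hf; apply (smooth_upto_comp exp exp);
    try (intro; apply derivable_pt_lim_exp); try assumption.
  - lia.
  - intros _. apply IHn, smooth_upto_weaken, Hf.
Qed.

Lemma smooth_upto_inv n : forall f,
  (forall q, f q <> 0) -> smooth_upto n f -> smooth_upto n (fun q => / f q).
Proof.
  induction n; intros f Hnz Hf;
    apply (smooth_upto_comp Rinv (fun x => - (/ x * / x)));
    try (intro; apply derivable_pt_lim_Rinv, Hnz); try assumption.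
  - lia.
  - intros _. simpl.
    replace (fun q => - (/ f q * / f q)) with (fun q => -1 * (/ f q * / f q))
      by (apply functional_extensionality; intro; ring).
    assert (IH := IHn f Hnz (smooth_upto_weaken _ _ Hf)).
    apply smooth_upto_mult; [apply smooth_upto_const | apply smooth_upto_mult; exact IH].
Qed.

Lemma smooth_upto_ln n f :
  (forall q, 0 < f q) -> smooth_upto n f -> smooth_upto n (fun q => ln (f q)).
Proof.
  intros Hpos Hf. apply (smooth_upto_comp ln Rinv); try assumption.
  - intro q. apply derivable_pt_lim_ln, Hpos.
  - intros Hn. destruct n; [lia|]. apply smooth_upto_inv.
    + intro q. specialize (Hpos q). lra.
    + apply smooth_upto_weaken, Hf.
Qed.

Lemma smooth_const c : smooth (fun _ => c).
Proof. apply smooth_upto_all. intro; apply smooth_upto_const. Qed.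

Lemma smooth_plus f g : smooth f -> smooth g -> smooth (fun q => f q + g q).
Proof. rewrite !smooth_upto_all. intros; apply smooth_upto_plus; auto. Qed.

Lemma smooth_mult f g : smooth f -> smooth g -> smooth (fun q => f q * g q).
Proof. rewrite !smooth_upto_all. intros; apply smooth_upto_mult; auto. Qed.

Lemma smooth_opp f : smooth f -> smooth (fun q => - f q).
Proof.
  intro Hf. replace (fun q => - f q) with (fun q => -1 * f q)
    by (apply functional_extensionality; intro; ring).
  apply smooth_mult; [apply smooth_const | exact Hf].
Qed.

Lemma smooth_minus f g : smooth f -> smooth g -> smooth (fun q => f q - g q).
Proof. intros Hf Hg. apply smooth_plus, smooth_opp; assumption. Qed.

Lemma smooth_exp f : smooth f -> smooth (fun q => exp (f q)).
Proof. rewrite !smooth_upto_all. intros; apply smooth_upto_exp; auto. Qed.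

Lemma smooth_inv f : (forall q, f q <> 0) -> smooth f -> smooth (fun q => / f q).
Proof. rewrite !smooth_upto_all. intros; apply smooth_upto_inv; auto. Qed.

Lemma smooth_div f g : (forall q, g q <> 0) -> smooth f -> smooth g -> smooth (fun q => f q / g q).
Proof. intros. apply smooth_mult; [|apply smooth_inv]; assumption. Qed.

Lemma smooth_ln f : (forall q, 0 < f q) -> smooth f -> smooth (fun q => ln (f q)).
Proof. rewrite !smooth_upto_all. intros; apply smooth_upto_ln; auto. Qed.

Lemma smooth_rpow B h : (forall q, 0 < B q) -> smooth B -> smooth h ->
  smooth (fun q => rpow (B q) (h q)).
Proof. intros. apply smooth_exp, smooth_mult; [| apply smooth_ln]; assumption. Qed.

Lemma smooth_pd f a : smooth f -> smooth (pd f a).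
Proof. intros H l. exact (H (a :: l)). Qed.

Lemma smooth_ex_pd f : smooth f -> ex_pd f.
Proof. intro H. exact (proj2 (H nil)). Qed.

Lemma smooth_cont3 f : smooth f -> cont3 f.
Proof. intro H. exact (proj1 (H nil)). Qed.

Ltac smooth_auto :=
  repeat first [ assumption | apply smooth_const | apply smooth_minus | apply smooth_plus
               | apply smooth_mult | apply smooth_opp | apply smooth_exp | apply smooth_ln
               | apply smooth_pd
               | match goal with H : forall _, smooth _ |- _ => apply H end
               | match goal with H : forall _ _, smooth _ |- _ => apply H end ].

Ltac ex_pd_auto := apply smooth_ex_pd; smooth_auto.

Lemma vapp_const X c p : vapp X (fun _ => c) p = 0.
Proof. unfold vapp, sum3. rewrite !pd_const. ring. Qed.

Lemma vapp_plus X u v p : ex_pd u -> ex_pd v ->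
  vapp X (fun q => u q + v q) p = vapp X u p + vapp X v p.
Proof. intros Hu Hv. unfold vapp, sum3. rewrite !pd_plus by assumption. ring. Qed.

Lemma vapp_mult X u v p : ex_pd u -> ex_pd v ->
  vapp X (fun q => u q * v q) p = vapp X u p * v p + u p * vapp X v p.
Proof. intros Hu Hv. unfold vapp, sum3. rewrite !pd_mult by assumption. ring. Qed.

Lemma vapp_exp X u p : ex_pd u -> vapp X (fun q => exp (u q)) p = exp (u p) * vapp X u p.
Proof.
  intro Hu. unfold vapp, sum3.
  rewrite !(pd_comp exp exp) by (try assumption; intro; apply derivable_pt_lim_exp). ring.
Qed.

Lemma vapp_ln X u p : (forall q, 0 < u q) -> ex_pd u ->
  vapp X (fun q => ln (u q)) p = vapp X u p / u p.
Proof.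
  intros Hpos Hu. unfold vapp, sum3.
  rewrite !(pd_comp ln Rinv) by (try assumption; intro; apply derivable_pt_lim_ln, Hpos).
  unfold Rdiv. ring.
Qed.

Lemma vapp_scale (F : pt -> R) (X : VF) h p :
  vapp (fun a q => F q * X a q) h p = F p * vapp X h p.
Proof. unfold vapp, sum3. ring. Qed.

Lemma bracket_scale (F G : pt -> R) (X Y : VF) a p :
  ex_pd F -> ex_pd G -> (forall b, ex_pd (X b)) -> (forall b, ex_pd (Y b)) ->
  bracket (fun b q => F q * X b q) (fun b q => G q * Y b q) a p =
  F p * G p * bracket X Y a p + F p * vapp X G p * Y a p - G p * vapp Y F p * X a p.
Proof.
  intros HF HG HX HY. unfold bracket. rewrite !vapp_scale, !vapp_mult by auto. ring.
Qed.

Definition lin_indep (r : idx -> idx -> R) : Prop :=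
  forall l : idx -> R, (forall a, sum3 (fun i => l i * r i a) = 0) -> forall i, l i = 0.

Definition det3 (r : idx -> idx -> R) : R :=
  r I1 I1 * (r I2 I2 * r I3 I3 - r I2 I3 * r I3 I2)
  - r I1 I2 * (r I2 I1 * r I3 I3 - r I2 I3 * r I3 I1)
  + r I1 I3 * (r I2 I1 * r I3 I2 - r I2 I2 * r I3 I1).

Definition vec3 (x y z : R) : idx -> R :=
  fun i => match i with I1 => x | I2 => y | I3 => z end.

(* If [det3 r = 0], the rows of the adjugate are relations among the rows of [r], so all
   2x2 minors vanish; then [(r I2 b, - r I1 b, 0)] is a relation for every [b], which kills
   the first row, and [(1, 0, 0)] is a nontrivial relation. *)
Lemma det3_neq0 r : lin_indep r -> det3 r <> 0.
Proof.
  intros Hr Hdet. unfold det3 in Hdet.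
  set (x1 := r I1 I1) in *. set (x2 := r I1 I2) in *. set (x3 := r I1 I3) in *.
  set (y1 := r I2 I1) in *. set (y2 := r I2 I2) in *. set (y3 := r I2 I3) in *.
  set (z1 := r I3 I1) in *. set (z2 := r I3 I2) in *. set (z3 := r I3 I3) in *.
  assert (relation : forall x y z, (forall a, sum3 (fun i => vec3 x y z i * r i a) = 0) ->
    x = 0 /\ y = 0 /\ z = 0).
  { intros x y z H. repeat split; [apply (Hr _ H I1) | apply (Hr _ H I2) | apply (Hr _ H I3)]. }
  assert (M1 := relation (y2*z3 - y3*z2) (-(x2*z3 - x3*z2)) (x2*y3 - x3*y2)).
  assert (M2 := relation (-(y1*z3 - y3*z1)) (x1*z3 - x3*z1) (-(x1*y3 - x3*y1))).
  assert (M3 := relation (y1*z2 - y2*z1) (-(x1*z2 - x2*z1)) (x1*y2 - x2*y1)).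
  destruct M1 as [M11 [M12 M13]];
    [intros []; unfold sum3; simpl; fold x1 x2 x3 y1 y2 y3 z1 z2 z3; lra|].
  destruct M2 as [M21 [M22 M23]];
    [intros []; unfold sum3; simpl; fold x1 x2 x3 y1 y2 y3 z1 z2 z3; lra|].
  destruct M3 as [M31 [M32 M33]];
    [intros []; unfold sum3; simpl; fold x1 x2 x3 y1 y2 y3 z1 z2 z3; lra|].
  assert (row1 : forall b, r I1 b = 0).
  { intro b. destruct (relation (r I2 b) (- r I1 b) 0) as [_ [H _]]; [|lra].
    intros []; destruct b; unfold sum3; simpl; fold x1 x2 x3 y1 y2 y3 z1 z2 z3; lra. }
  destruct (relation 1 0 0) as [H _]; [|lra].
  intro a. unfold sum3; simpl. rewrite row1. ring.
Qed.

Lemma cramer1 (r : idx -> idx -> R) (b c : idx -> R) :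
  (forall a, b a = sum3 (fun i => c i * r i a)) ->
  c I1 * det3 r = det3 (fun i a => match i with I1 => b a | _ => r i a end).
Proof. intro H. unfold det3. rewrite !H. unfold sum3. ring. Qed.

Lemma structure_fns_unique D c c' : frame D -> structure_fns D c -> structure_fns D c' ->
  forall i j k p, c' i j k p = c i j k p.
Proof.
  intros [_ HF] H H' i j k p. apply Rminus_diag_uniq.
  apply (HF p (fun i => c' i j k p - c i j k p)). intro a.
  specialize (H j k a p). specialize (H' j k a p). unfold sum3 in *. lra.
Qed.

Lemma structure_fns_smooth D c j k : frame D -> structure_fns D c -> smooth (c I1 j k).
Proof.
  intros [HS HF] Hc.
  assert (Hdet : forall p, det3 (fun i a => D i a p) <> 0)
    by (intro p; apply det3_neq0; intros l Hl; exact (HF p l Hl)).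
  replace (c I1 j k) with (fun p =>
    det3 (fun i a => match i with I1 => bracket (D j) (D k) a p | _ => D i a p end)
      / det3 (fun i a => D i a p)).
  - apply smooth_div; [exact Hdet | |];
      cbv beta iota delta [det3 bracket vapp sum3]; smooth_auto.
  - apply functional_extensionality; intro p.
    rewrite <- (cramer1 (fun i a => D i a p) _ (fun i => c i j k p)) by (intro a; apply Hc).
    field. apply Hdet.
Qed.

Definition segment (p q : pt) (t : R) : pt :=
  match p, q with (x1, y1, z1), (x2, y2, z2) =>
    (x1 + t * (x2 - x1), y1 + t * (y2 - y1), z1 + t * (z2 - z1)) end.

Lemma segment_0 p q : segment p q 0 = p.
Proof. destruct p as [[x y] z], q as [[u v] w]; simpl. f_equal; [f_equal|]; ring. Qed.

Lemma segment_1 p q : segment p q 1 = q.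
Proof. destruct p as [[x y] z], q as [[u v] w]; simpl. f_equal; [f_equal|]; ring. Qed.

Lemma coord_segment p q t t' a :
  coord (segment p q t') a - coord (segment p q t) a = (t' - t) * (coord q a - coord p a).
Proof. destruct p as [[x y] z], q as [[u v] w], a; simpl; ring. Qed.

Lemma cont3_segment h p q : cont3 h -> continuity (fun t => h (segment p q t)).
Proof.
  intros Hh t eps He. simpl. unfold R_dist.
  destruct (Hh (segment p q t) eps He) as [d [Hd H]].
  set (M := 1 + Rabs (coord q I1 - coord p I1) + Rabs (coord q I2 - coord p I2)
              + Rabs (coord q I3 - coord p I3)).
  assert (HM : forall a, Rabs (coord q a - coord p a) <= M /\ 1 <= M).
  { intro a. unfold M. assert (H1 := Rabs_pos (coord q I1 - coord p I1)).
    assert (H2 := Rabs_pos (coord q I2 - coord p I2)).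
    assert (H3 := Rabs_pos (coord q I3 - coord p I3)). destruct a; lra. }
  assert (HM1 := proj2 (HM I1)).
  exists (d / M). split; [apply Rdiv_lt_0_compat; lra|].
  intros t' [_ Ht']. apply H. intro a. rewrite coord_segment, Rabs_mult.
  apply Rle_lt_trans with (Rabs (t' - t) * M).
  - apply Rmult_le_compat_l; [apply Rabs_pos | apply HM].
  - apply (Rmult_lt_reg_r (/ M)); [apply Rinv_0_lt_compat; lra|].
    rewrite Rmult_assoc, Rinv_r, Rmult_1_r by lra. exact Ht'.
Qed.

Lemma cont3_constant_sign h : cont3 h -> (forall p, h p <> 0) ->
  (forall p, 0 < h p) \/ (forall p, h p < 0).
Proof.
  intros Hc Hnz.
  assert (no_change : forall p q, h p < 0 -> 0 < h q -> False).
  { intros p q Hp Hq.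
    destruct (IVT (fun t => h (segment p q t)) 0 1 (cont3_segment h p q Hc) Rlt_0_1)
      as [t [_ Ht]]; [rewrite segment_0; exact Hp | rewrite segment_1; exact Hq |].
    exact (Hnz _ Ht). }
  set (p0 := (0, 0, 0) : pt).
  destruct (Rtotal_order (h p0) 0) as [H | [H | H]]; [right | exfalso; exact (Hnz _ H) | left];
    intro p; destruct (Rtotal_order (h p) 0) as [H' | [H' | H']];
    try assumption; exfalso; solve [exact (Hnz _ H') | eapply no_change; eassumption].
Qed.

Definition delta (i j : idx) : R :=
  match i, j with I1, I1 | I2, I2 | I3, I3 => 1 | _, _ => 0 end.

Lemma delta_diag i : delta i i = 1. Proof. now destruct i. Qed.
Lemma delta_next i : delta (next i) i = 0. Proof. now destruct i. Qed.
Lemma delta_next_next i : delta (next (next i)) i = 0. Proof. now destruct i. Qed.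
Lemma next_next_next i : next (next (next i)) = i. Proof. now destruct i. Qed.

Definition rescale (f : idx -> pt -> R) (D : idx -> VF) : idx -> VF :=
  fun i a p => f i p * D i a p.

(* [[f_j D_j, f_k D_k] = f_j f_k [D_j, D_k] + f_j D_j(f_k) D_k - f_k D_k(f_j) D_j] *)
Definition rescale_struct (f : idx -> pt -> R) (D : idx -> VF)
    (c : idx -> idx -> idx -> pt -> R) : idx -> idx -> idx -> pt -> R :=
  fun i j k p =>
    f j p * f k p * c i j k p / f i p
    + delta i k * f j p * vapp (D j) (f k) p / f k p
    - delta i j * f k p * vapp (D k) (f j) p / f j p.

Lemma vapp_rescale f D i h p : vapp (rescale f D i) h p = f i p * vapp (D i) h p.
Proof. apply vapp_scale. Qed.

Lemma frame_rescale f D : (forall i, smooth (f i)) -> (forall i p, f i p <> 0) ->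
  frame D -> frame (rescale f D).
Proof.
  intros Hf Hnz [HS HF]. split.
  - intros i a. apply smooth_mult; [apply Hf | apply HS].
  - intros p l Hl i.
    assert (H : l i * f i p = 0).
    { apply (HF p (fun i => l i * f i p)). intro a. rewrite <- (Hl a).
      unfold sum3, rescale. ring. }
    apply Rmult_integral in H as [H | H]; [exact H | exfalso; exact (Hnz i p H)].
Qed.

Lemma structure_fns_rescale f D c : (forall i, ex_pd (f i)) -> (forall i p, f i p <> 0) ->
  (forall i a, ex_pd (D i a)) -> structure_fns D c ->
  structure_fns (rescale f D) (rescale_struct f D c).
Proof.
  intros Hf Hnz HD Hc j k a p. unfold rescale.
  rewrite bracket_scale, (Hc j k a p) by auto.
  assert (N1 := Hnz I1 p). assert (N2 := Hnz I2 p). assert (N3 := Hnz I3 p).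
  unfold rescale_struct, sum3. destruct j, k; simpl; field; auto.
Qed.

Definition norm_factor (A B : pt -> R) (s : R) (g : idx -> pt -> R) (i : idx) (p : pt) : R :=
  s * A p * rpow (B p) (g (next i) p + g (next (next i)) p).

Lemma tr_D_rescale A B s g D : tr_D A B s g D = rescale (norm_factor A B s g) D.
Proof. reflexivity. Qed.

Definition E1_rhs (g : idx -> pt -> R) (p : pt) : R :=
  g I2 p * g I3 p + g I3 p * g I1 p + g I1 p * g I2 p.

Definition E2_rhs (g : idx -> pt -> R) (D : idx -> VF) (xi : pt -> R)
    (c : idx -> idx -> idx -> pt -> R) (i : idx) (p : pt) : R :=
  vapp (D i) (fun q => g (next i) q + g (next (next i)) q) p
  + c (next i) i (next i) p * (g i p - g (next i) p)
  + c (next (next i)) i (next (next i)) p * (g i p - g (next (next i)) p)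
  - 2 * vapp (D i) xi p * g i p.

Lemma sum_neg_of_E1 (x y z : R) :
  0 = y * z + z * x + x * y -> 0 < x -> y < 0 -> z < 0 -> x + y < 0.
Proof. intros. nra. Qed.

Lemma E1_normal_form (x y z a : R) :
  0 = y * z + z * x + x * y -> 0 < x -> y < 0 -> z < 0 -> a * x = / 2 ->
  0 < - (x + y) / x /\ a * y = / 2 * (- 1 - - (x + y) / x)
  /\ a * z = / 2 * (- 1 - / (- (x + y) / x)).
Proof.
  intros HE Hx Hy Hz Ha.
  assert (Hxy := sum_neg_of_E1 x y z HE Hx Hy Hz).
  assert (Ea : a = / (2 * x)) by (apply (Rmult_eq_reg_r x); [rewrite Ha; field |]; lra).
  assert (Ez : z = - (x * y) / (x + y)) by (field_simplify_eq; lra).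
  split; [apply Rdiv_lt_0_compat; lra|].
  subst a. rewrite Ez. split; field; lra.
Qed.

Lemma rpow_pos x e : 0 < rpow x e.
Proof. apply exp_pos. Qed.

Lemma rpow_rpow x a b : rpow (rpow x a) b = rpow x (a * b).
Proof. unfold rpow. rewrite ln_exp. f_equal. ring. Qed.

Lemma rpow_1 x : 0 < x -> rpow x 1 = x.
Proof. intro Hx. unfold rpow. rewrite Rmult_1_l. apply exp_ln, Hx. Qed.

Lemma rpow_inj_l x y e : 0 < x -> 0 < y -> e <> 0 -> rpow x e = rpow y e -> x = y.
Proof.
  intros Hx Hy He H. apply exp_inv, (Rmult_eq_reg_l e) in H; [|exact He].
  apply ln_inv; assumption.
Qed.

Lemma unit_sign_exists (h : pt -> R) : (forall p, 0 < h p) \/ (forall p, h p < 0) ->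
  exists s, (s = 1 \/ s = -1) /\ forall p, s * h p < 0.
Proof.
  intros [H | H]; [exists (-1) | exists 1]; split; auto; intro p; specialize (H p); lra.
Qed.

Lemma unit_sign_unique s s' x : (s = 1 \/ s = -1) -> (s' = 1 \/ s' = -1) ->
  s * x < 0 -> s' * x < 0 -> s' = s.
Proof. intros [-> | ->] [-> | ->]; lra. Qed.

Definition normalizing (A B : pt -> R) (s : R) (g1 c123 : pt -> R) : Prop :=
  (forall p, A p * g1 p = / 2) /\ (forall p, s * A p * rpow (B p) (2 * g1 p) * c123 p = -2).

Section Normalization.

Variables (A B : pt -> R) (s : R) (g : idx -> pt -> R).
Hypotheses (HA : smooth A) (HB : smooth B) (Hg : forall i, smooth (g i)).
Hypotheses (HApos : forall p, 0 < A p) (HBpos : forall p, 0 < B p) (Hs : s <> 0).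

Lemma norm_factor_smooth i : smooth (norm_factor A B s g i).
Proof. unfold norm_factor, rpow. smooth_auto. Qed.

Lemma norm_factor_neq0 i p : norm_factor A B s g i p <> 0.
Proof.
  assert (HAp := HApos p). unfold norm_factor, rpow.
  assert (He := exp_pos ((g (next i) p + g (next (next i)) p) * ln (B p))).
  apply Rmult_integral_contrapositive_currified; [|lra].
  apply Rmult_integral_contrapositive_currified; lra.
Qed.

Lemma vapp_norm_factor X i p : vapp X (norm_factor A B s g i) p = norm_factor A B s g i p *
  (vapp X A p / A p
   + (vapp X (g (next i)) p + vapp X (g (next (next i))) p) * ln (B p)
   + (g (next i) p + g (next (next i)) p) * (vapp X B p / B p)).
Proof.
  assert (HAp := HApos p). unfold norm_factor, rpow.
  rewrite vapp_mult, vapp_mult, vapp_const, vapp_exp, vapp_mult, vapp_plus, vapp_ln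
    by (assumption || ex_pd_auto).
  assert (HBp := HBpos p). field. split; lra.
Qed.

Lemma E2_rhs_tr (D : idx -> VF) (xi : pt -> R) c i p : smooth xi ->
  E2_rhs (tr_g A g) (tr_D A B s g D) (tr_xi A B g xi) (rescale_struct (norm_factor A B s g) D c) i p
  = norm_factor A B s g i p * A p *
    (E2_rhs g D xi c i p - ln (B p) * vapp (D i) (E1_rhs g) p
     - 2 * (vapp (D i) B p / B p) * E1_rhs g p).
Proof.
  intro Hxi.
  assert (HAp := HApos p). assert (HBp := HBpos p).
  assert (Ni := norm_factor_neq0 i p). assert (Nj := norm_factor_neq0 (next i) p).
  assert (Nk := norm_factor_neq0 (next (next i)) p).
  rewrite tr_D_rescale. unfold E2_rhs, rescale_struct, tr_g, tr_xi, E1_rhs.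
  rewrite !delta_diag, !delta_next, !delta_next_next, !vapp_rescale, !vapp_norm_factor,
    !next_next_next.
  rewrite !vapp_plus, !vapp_mult, !vapp_plus, !vapp_ln by (assumption || ex_pd_auto).
  destruct i; simpl in *; field; repeat split; (assumption || lra).
Qed.

Lemma tr_structure_fns D c : frame D -> structure_fns D c ->
  structure_fns (tr_D A B s g D) (rescale_struct (norm_factor A B s g) D c).
Proof.
  intros [HDs _] Hc. rewrite tr_D_rescale. apply structure_fns_rescale; try assumption.
  - intro i. apply smooth_ex_pd, norm_factor_smooth.
  - exact norm_factor_neq0.
  - intros i a. apply smooth_ex_pd, HDs.
Qed.

Lemma tr_MC_pre D xi : MC_pre g D xi -> MC_pre (tr_g A g) (tr_D A B s g D) (tr_xi A B g xi).
Proof.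
  intros [HD [_ [Hxi [HE1 [c [Hc HE2]]]]]].
  assert (HE1' : E1_rhs g = fun _ => 0)
    by (apply functional_extensionality; intro p; symmetry; apply HE1).
  split; [|split; [|split; [|split]]].
  - rewrite tr_D_rescale.
    apply frame_rescale; [exact norm_factor_smooth | exact norm_factor_neq0 | exact HD].
  - intro i. unfold tr_g. smooth_auto.
  - unfold tr_xi. smooth_auto.
  - intro p. unfold tr_g. transitivity (A p * A p * E1_rhs g p);
      [rewrite HE1'; ring | unfold E1_rhs; ring].
  - exists (rescale_struct (norm_factor A B s g) D c).
    split; [apply tr_structure_fns; assumption|].
    intros i p. change (0 = E2_rhs (tr_g A g) (tr_D A B s g D) (tr_xi A B g xi)
      (rescale_struct (norm_factor A B s g) D c) i p).
    rewrite E2_rhs_tr by assumption. rewrite HE1', vapp_const.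
    specialize (HE2 i p). change (0 = E2_rhs g D xi c i p) in HE2. rewrite <- HE2. ring.
Qed.

Lemma rescale_struct_123 D c p : rescale_struct (norm_factor A B s g) D c I1 I2 I3 p
  = s * A p * rpow (B p) (2 * g I1 p) * c I1 I2 I3 p.
Proof.
  assert (HAp := HApos p).
  assert (Hexp : forall x, exp x <> 0) by (intro x; apply Rgt_not_eq, exp_pos).
  unfold rescale_struct, norm_factor, rpow. simpl.
  assert (K : exp ((g I3 p + g I1 p) * ln (B p)) * exp ((g I1 p + g I2 p) * ln (B p))
            = exp (2 * g I1 p * ln (B p)) * exp ((g I2 p + g I3 p) * ln (B p)))
    by (rewrite <- !exp_plus; f_equal; ring).
  transitivity (s * A p * (exp ((g I3 p + g I1 p) * ln (B p)) * exp ((g I1 p + g I2 p) * ln (B p)))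
    * c I1 I2 I3 p / exp ((g I2 p + g I3 p) * ln (B p))).
  - field. repeat split; auto; lra.
  - rewrite K. field. auto.
Qed.

Lemma tr_MC_normal_iff D xi c : MC_pre g D xi -> structure_fns D c ->
  (forall p, g I1 p > 0 /\ g I2 p < 0 /\ g I3 p < 0) ->
  MC_normal (tr_g A g) (tr_D A B s g D) (tr_xi A B g xi) <-> normalizing A B s (g I1) (c I1 I2 I3).
Proof.
  intros Hpre Hc Hsign.
  assert (HE1 := proj1 (proj2 (proj2 (proj2 Hpre)))).
  assert (Hpre' := tr_MC_pre D xi Hpre).
  assert (Hc' := tr_structure_fns D c (proj1 Hpre) Hc).
  split.
  - intros [_ [[u [_ [_ Hu]]] H123]]. split.
    + intro p. destruct (Hu p) as [H1 _]. unfold tr_g in H1. lra.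
    + intro p. rewrite <- (rescale_struct_123 D c). apply H123, Hc'.
  - intros [HAg H123]. split; [exact Hpre' | split].
    + exists (fun p => - (g I1 p + g I2 p) / g I1 p).
      assert (Hg1 : forall p, g I1 p <> 0) by (intro p; specialize (Hsign p); lra).
      split; [apply smooth_div; smooth_auto|].
      assert (Hnf := fun p => E1_normal_form _ _ _ (A p) (HE1 p)
        (proj1 (Hsign p)) (proj1 (proj2 (Hsign p))) (proj2 (proj2 (Hsign p))) (HAg p)).
      split; [intro p; apply Hnf|].
      intro p. unfold tr_g. destruct (Hnf p) as [_ [H2 H3]]. repeat split; [| exact H2 | exact H3].
      rewrite HAg. ring.
    + intros c' Hc'' p.
      rewrite (structure_fns_unique _ _ _ (proj1 Hpre') Hc' Hc''), rescale_struct_123.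
      apply H123.
Qed.

End Normalization.

Lemma normalizing_exists (g1 c123 : pt -> R) : smooth g1 -> (forall p, 0 < g1 p) ->
  smooth c123 -> (forall p, c123 p <> 0) ->
  exists A B s, smooth A /\ smooth B /\ (forall p, A p > 0 /\ B p > 0) /\ (s = 1 \/ s = -1) /\
    normalizing A B s g1 c123.
Proof.
  intros Hg1 Hg1pos Hc Hc0.
  destruct (unit_sign_exists c123 (cont3_constant_sign _ (smooth_cont3 _ Hc) Hc0))
    as [s [Hs Hsc]].
  assert (Hg1' : forall p, 2 * g1 p <> 0) by (intro p; specialize (Hg1pos p); lra).
  set (A := fun p => / (2 * g1 p)).
  assert (HApos : forall p, 0 < A p)
    by (intro p; apply Rinv_0_lt_compat; specialize (Hg1pos p); lra).
  assert (HsAc : forall p, s * A p * c123 p < 0).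
  { intro p. specialize (Hsc p). specialize (HApos p). nra. }
  set (X := fun p => -2 / (s * A p * c123 p)).
  assert (HXpos : forall p, 0 < X p).
  { intro p. specialize (HsAc p). unfold X. apply Rdiv_neg_neg; lra. }
  set (B := fun p => rpow (X p) (/ (2 * g1 p))).
  assert (HA : smooth A) by (apply smooth_inv; [exact Hg1' | smooth_auto]).
  exists A, B, s. split; [exact HA | split; [| split; [| split; [exact Hs | split]]]].
  - apply smooth_rpow; [exact HXpos | | apply smooth_inv; [exact Hg1' | smooth_auto]].
    apply smooth_div; [intro p; specialize (HsAc p); lra | smooth_auto | smooth_auto].
  - intro p. split; [apply HApos | apply rpow_pos].
  - intro p. unfold A. field. specialize (Hg1pos p); lra.
  - intro p. unfold B. rewrite rpow_rpow, Rinv_l, rpow_1 by auto.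
    unfold X. field. assert (HAp := HApos p). repeat split; [apply Hc0 | lra | destruct Hs; lra].
Qed.

Lemma normalizing_sign A B s g1 c123 p : (forall p, 0 < g1 p) ->
  normalizing A B s g1 c123 -> s * c123 p < 0.
Proof.
  intros Hg1 [HA Hc]. specialize (HA p). specialize (Hc p). specialize (Hg1 p).
  assert (Hr := rpow_pos (B p) (2 * g1 p)).
  assert (HAp : 0 < A p) by (apply (Rmult_lt_reg_r (g1 p)); [lra | rewrite HA; lra]).
  assert (HAr : 0 < A p * rpow (B p) (2 * g1 p)) by (apply Rmult_lt_0_compat; assumption).
  nra.
Qed.

Lemma normalizing_unique A B s A' B' s' g1 c123 : (forall p, 0 < g1 p) ->
  (forall p, 0 < B p /\ 0 < B' p) -> (s = 1 \/ s = -1) -> (s' = 1 \/ s' = -1) ->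
  normalizing A B s g1 c123 -> normalizing A' B' s' g1 c123 -> A' = A /\ B' = B /\ s' = s.
Proof.
  intros Hg1 HB Hs Hs' Hn Hn'.
  assert (Hg1' : forall p, g1 p <> 0) by (intro p; specialize (Hg1 p); lra).
  assert (EA : A' = A).
  { apply functional_extensionality; intro p. apply (Rmult_eq_reg_r (g1 p)); [|apply Hg1'].
    rewrite (proj1 Hn p), (proj1 Hn' p). reflexivity. }
  subst A'.
  assert (Es : s' = s).
  { apply (unit_sign_unique s s' (c123 (0, 0, 0))); try assumption;
      eapply normalizing_sign; eassumption. }
  subst s'. split; [reflexivity | split; [|reflexivity]].
  apply functional_extensionality; intro p.
  destruct (HB p) as [HBp HB'p].
  apply (rpow_inj_l _ _ (2 * g1 p)); try assumption; [specialize (Hg1 p); lra|].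
  assert (E := proj2 Hn p). assert (E' := proj2 Hn' p).
  apply (Rmult_eq_reg_r (s * A p * c123 p)).
  - transitivity (-2); [rewrite <- E' | rewrite <- E]; ring.
  - intro H0. replace (s * A p * rpow (B p) (2 * g1 p) * c123 p) with
      (s * A p * c123 p * rpow (B p) (2 * g1 p)) in E by ring.
    rewrite H0 in E. lra.
Qed.

Theorem lemma6p8 (g : idx -> pt -> R) (D : idx -> VF) (xi : pt -> R) :
  MC_pre g D xi ->
  (forall p, g I1 p > 0 /\ g I2 p < 0 /\ g I3 p < 0) ->
  (forall c, structure_fns D c -> forall p, c I1 I2 I3 p <> 0) ->
  exists (A B : pt -> R) (s : R),
    (smooth A /\ smooth B /\ (forall p, A p > 0 /\ B p > 0) /\ (s = 1 \/ s = -1) /\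
     MC_normal (tr_g A g) (tr_D A B s g D) (tr_xi A B g xi)) /\
    forall (A' B' : pt -> R) (s' : R),
      smooth A' -> smooth B' -> (forall p, A' p > 0 /\ B' p > 0) -> (s' = 1 \/ s' = -1) ->
      MC_normal (tr_g A' g) (tr_D A' B' s' g D) (tr_xi A' B' g xi) ->
      A' = A /\ B' = B /\ s' = s.
Proof.
  intros Hpre Hsign Hc0.
  assert (Hpre' := Hpre). destruct Hpre' as [HD [Hg [_ [_ [c [Hc _]]]]]].
  assert (Hg1 : forall p, 0 < g I1 p) by (intro p; apply Hsign).
  assert (Hunit : forall s, s = 1 \/ s = -1 -> s <> 0) by (intros s [-> | ->]; lra).
  assert (Hnormal_iff := fun A B s HA HB HAB Hs => tr_MC_normal_iff A B s g HA HB Hg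
    (fun p => proj1 (HAB p)) (fun p => proj2 (HAB p)) (Hunit s Hs) D xi c Hpre Hc Hsign).
  destruct (normalizing_exists (g I1) (c I1 I2 I3) (Hg I1) Hg1
    (structure_fns_smooth D c I2 I3 HD Hc) (Hc0 c Hc)) as [A [B [s [HA [HB [HAB [Hs Hn]]]]]]].
  exists A, B, s. split.
  - do 4 (split; [assumption|]). apply (Hnormal_iff A B s); assumption.
  - intros A' B' s' HA' HB' HAB' Hs' Hn'.
    apply (normalizing_unique A B s A' B' s' (g I1) (c I1 I2 I3) Hg1); try assumption.
    + intro p. split; [apply HAB | apply HAB'].
    + apply (Hnormal_iff A' B' s'); assumption.
Qed.
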